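(* Let $E=\begin{pmatrix}1&0\\0&z\end{pmatrix}$, $U=\begin{pmatrix}x&z\\1&0\end{pmatrix}$ and $P=UE$, matrices over $\mathrm{GF}(2)[x,z]$, acting on row vectors from the right. Then (i) for $n\ge0$, $(f^{(n+1)},g^{(n+1)})=(f^{(n)},g^{(n)})M_n$ where $M_n=E$ if $n$ is even and $M_n=U$ if $n$ is odd; (ii) for $i\ge1$, $$(f^{(2i)},g^{(2i)})=(x+z,z^2)\,P^{i-1}U\quad\text{and}\quad (f^{(2i+1)},g^{(2i+1)})=(x+z,z^2)\,P^{i}.$$
   Context: $\mathbb{F}=\mathrm{GF}(2)$, $R=\mathbb{F}[x,z]$, $|\cdot|$ is total degree. Let $(r_0,r_1,\ldots)$ be the binary sequence with $r_i=1$ if $i=2^j-1$ for some $j\ge 0$ and $r_i=0$ otherwise. For $n\ge1$ its inverse form is $R^{(1-n)}=\sum_{j=1-n}^{0}r_{-j}\,x^{j}z^{1-n-j}\in\mathbb{F}[x^{-1},z^{-1}]$. For a form $f\in R$ and such a form $G$, $\Delta(f;G)$ is the coefficient of $x^{|f|+|G|}z^0$ in $f\cdot G$ computed in $\mathbb{F}[x^{\pm1},z^{\pm1}]$ if $|f|+|G|\le 0$, and $0$ otherwise. Define forms recursively: $(f^{(0)},g^{(0)})=(x+z,z)$; for $k\ge0$ let $d_k=|g^{(k)}|-|f^{(k)}|$ and $\Delta_k=\Delta(f^{(k)};R^{(-1-k)})$, and set $(f^{(k+1)},g^{(k+1)})=(f^{(k)},zg^{(k)})$ if $\Delta_k=0$;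 $=(f^{(k)}+x^{-d_k}g^{(k)},\,zg^{(k)})$ if $\Delta_k=1$ and $d_k\le0$; $=(x^{d_k}f^{(k)}+g^{(k)},\,zf^{(k)})$ if $\Delta_k=1$ and $d_k>0$. *)

From HB Require Import structures.
From mathcomp Require Import all_boot all_order all_algebra.
From mathcomp Require Import mpoly.
Set Implicit Arguments. Unset Strict Implicit. Unset Printing Implicit Defensive.
Import GRing.Theory.
Local Open Scope ring_scope.

Definition F := 'F_2.
Definition R := {mpoly F[2]}.
Definition vx : R := 'X_(0 : 'I_2).
Definition vz : R := 'X_(1 : 'I_2).

(* Total degree |f| (forms are nonzero here; |0| is taken to be 0). *)
Definition tdeg (f : R) : nat := (msize f).-1.

Definition coefxz (f : R) (a b : nat) : F :=
  f@_[multinom (if i == 0 :> nat then a else b) | i < 2].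

(* r_i = 1 iff i = 2^j - 1 for some j >= 0 (such a j necessarily satisfies j <= i). *)
Definition in_r (i : nat) : bool := [exists j : 'I_i.+1, i == (2 ^ j).-1]%N.
Definition rseq (i : nat) : F := (in_r i)%:R.

(* Delta(f; R^{(1-n)}) for n >= 1, where
   R^{(1-n)} = sum_{j=1-n}^{0} r_{-j} x^j z^{1-n-j}, of degree 1-n.
   The coefficient of x^{|f|+1-n} z^0 in f * R^{(1-n)} (in the Laurent ring)
   is, writing m = -j in [0, n-1], the sum of r_m times the coefficient of
   x^{|f|+1-n+m} z^{n-1-m} in f (zero when |f|+1-n+m < 0).
   When |f| + (1-n) > 0 the value is 0. *)
Definition Delta (f : R) (n : nat) : F :=
  if (tdeg f < n)%N then
    \sum_(m < n | (n.-1 - m <= tdeg f)%N)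
      rseq m * coefxz f (tdeg f - (n.-1 - m)) (n.-1 - m)
  else 0.

(* One step of the recursion: given (f^(k), g^(k)), compute (f^(k+1), g^(k+1)).
   Delta_k = Delta(f^(k); R^(-1-k)), i.e. n = k+2.
   d_k = |g| - |f|; the case d_k <= 0 uses x^{-d_k} = x^{|f|-|g|}. *)
Definition step (k : nat) (fg : R * R) : R * R :=
  let: (f, g) := fg in
  if Delta f k.+2 == 0 then (f, vz * g)
  else if (tdeg g <= tdeg f)%N then (f + vx ^+ (tdeg f - tdeg g) * g, vz * g)
  else (vx ^+ (tdeg g - tdeg f) * f + g, vz * f).

Fixpoint fgseq (k : nat) : R * R :=
  match k with
  | 0 => (vx + vz, vz)
  | k'.+1 => step k' (fgseq k')
  end.

Definition rowv (f g : R) : 'rV[R]_2 :=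
  \row_(j < 2) (if j == 0 :> nat then f else g).

Definition mx2 (a b c d : R) : 'M[R]_2 :=
  \matrix_(i < 2, j < 2)
    (if i == 0 :> nat then (if j == 0 :> nat then a else b)
     else (if j == 0 :> nat then c else d)).

Definition Emx : 'M[R]_2 := mx2 1 0 0 vz.
Definition Umx : 'M[R]_2 := mx2 vx vz 1 0.
Definition Pmx : 'M[R]_2 := Umx *m Emx.
Definition Mmx (n : nat) : 'M[R]_2 := if odd n then Umx else Emx.

From HB Require Import structures.
From mathcomp Require Import all_boot all_order all_algebra.
From mathcomp Require Import mpoly ring zify.
Set Implicit Arguments. Unset Strict Implicit. Unset Printing Implicit Defensive.
Import GRing.Theory.
Local Open Scope ring_scope.

(* A form of degree d is encoded by its dehomogenisation q(z) = f(1,z).  By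
   induction, f^(2i) and f^(2i+1) both encode F_(i+1), while g^(2i) and
   g^(2i+1) encode z F_i and z^2 F_i, where F_0 = 1, F_1 = 1 + z and
   F_(n+2) = F_(n+1) + z^2 F_n.  With S = sum_j z^(2^j), reversing the sum
   defining Delta shows that Delta_(2i) and Delta_(2i+1) are the coefficients
   of z^(2i+2) and z^(2i+3) in F_(i+1) S.  Over GF(2), S = S^2 + z + (terms of
   high degree), so t = S^2 and 1 + t = (1 + S)^2 are both roots of
   l^2 = l + z^2 to high order, whence F_m S = S^(2m+2) + z (1 + S)^(2m) to
   high order.  Squares have no odd coefficients and (1 + S)^m has coefficient
   1 at z^m, so Delta_(2i) = 0 and Delta_(2i+1) = 1 with d_(2i+1) = 1: the
   steps alternate between E and U, and grouping them in pairs gives P = UE. *)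

Lemma pchar2_poly : 2 \in [pchar {poly F}].
Proof. by rewrite pchar_poly pchar_Fp. Qed.

Lemma sqrD_pchar2 (a b : {poly F}) : (a + b) ^+ 2 = a ^+ 2 + b ^+ 2.
Proof. by rewrite sqrrD mulrn_pchar ?pchar2_poly // addr0. Qed.

Lemma expF2 (c : F) : c ^+ 2 = c.
Proof. by case: c => -[|[|n]] hn; apply: val_inj. Qed.

Lemma sqr_polyE (p : {poly F}) : p ^+ 2 = p \Po 'X^2.
Proof.
elim/poly_ind: p => [|p c IH]; first by rewrite expr0n comp_poly0.
rewrite sqrD_pchar2 comp_polyD comp_polyM comp_polyX comp_polyC -IH.
by rewrite exprMn -polyC_exp expF2.
Qed.

Lemma sqr_sum_pchar2 (I : Type) (r : seq I) (P : pred I) (G : I -> {poly F}) :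
  (\sum_(i <- r | P i) G i) ^+ 2 = \sum_(i <- r | P i) G i ^+ 2.
Proof. exact: (rmorph_sum (pFrobenius_aut pchar2_poly)). Qed.

Lemma coef_sqr_double (p : {poly F}) k : (p ^+ 2)`_k.*2 = p`_k.
Proof. by rewrite sqr_polyE coef_comp_poly_Xn // -muln2 dvdn_mull // mulnK. Qed.

Lemma coef_sqr_odd (p : {poly F}) k : (p ^+ 2)`_k.*2.+1 = 0.
Proof. by rewrite sqr_polyE coef_comp_poly_Xn // dvdn2 /= odd_double. Qed.

Lemma coef_exp_diag (u : {poly F}) K : u = u ^+ 2 + 'X + 'X^K ->
  forall m, (m < K)%N -> (u ^+ m)`_m = 1.
Proof.
move=> uE; elim/ltn_ind=> m IH ltmK.
have diag_even k : (k.*2 <= m)%N -> (u ^+ k.*2)`_k.*2 = 1.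
  case: k => [|k] le2k; first by rewrite expr0 coef1.
  by rewrite -[in u ^+ _]muln2 exprM coef_sqr_double IH //; lia.
have [k mE] : exists k, m = (k.*2 + odd m)%N by exists m./2; rewrite addnC odd_double_half.
move: mE; case: (odd m) => /= mE; last by rewrite mE addn0 diag_even //; lia.
have -> : u ^+ m = (u ^+ k.+1) ^+ 2 + u ^+ k.*2 * 'X + u ^+ k.*2 * 'X^K.
  by rewrite mE addn1 exprSr {2}uE !mulrDr -exprM -exprD muln2 addn2.
have lt2kK : (k.*2.+1 < K)%N by lia.
by rewrite mE addn1 !coefD coef_sqr_odd coefMX coefMXn lt2kK diag_even ?add0r ?addr0 //; lia.
Qed.

Definition pow2_sum (J : nat) : {poly F} := \sum_(j < J.+1) 'X^(2 ^ j).

Lemma coef_pow2_sum J c : (pow2_sum J)`_c = [exists j : 'I_J.+1, c == 2 ^ j]%N%:R.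
Proof.
rewrite /pow2_sum coef_sum; under eq_bigr do rewrite coefXn.
case: existsP => [[j0 /eqP ->]|no_j].
  rewrite (bigD1 j0) //= eqxx big1 ?addr0 // => j /negbTE; rewrite eqn_exp2l //.
  by move=> neq; case: eqP => // /val_inj ji; rewrite ji eqxx in neq.
by rewrite big1 // => j _; case: eqP => // cE; case: no_j; exists j; apply/eqP.
Qed.

Lemma pow2_sum_sqr J : pow2_sum J = pow2_sum J ^+ 2 + 'X + 'X^(2 ^ J.+1).
Proof.
rewrite {2}/pow2_sum sqr_sum_pchar2; under eq_bigr do rewrite -exprM -expnSr.
rewrite big_ord_recr /= /pow2_sum big_ord_recl /= expn0 expr1.
rewrite [RHS]addrAC addrK_pchar2 ?pchar2_poly // addrC.
by congr (_ + _); apply: eq_bigr => i _; rewrite /bump add1n.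
Qed.

Lemma coef_pow2_sum_exp_lt J n j : (j < n)%N -> (pow2_sum J ^+ n)`_j = 0.
Proof.
have -> : pow2_sum J = 'X * \sum_(i < J.+1) 'X^((2 ^ i).-1).
  by rewrite big_distrr /=; apply: eq_bigr => i _; rewrite -exprS prednK ?expn_gt0.
by move=> ltjn; rewrite exprMn coefXnM ltjn.
Qed.

Fixpoint fibpoly (n : nat) : {poly F} :=
  match n with
  | 0 => 1
  | m.+1 => match m with 0 => 1 + 'X | k.+1 => fibpoly m + 'X^2 * fibpoly k end
  end.

Lemma fibpolySS n : fibpoly n.+2 = fibpoly n.+1 + 'X^2 * fibpoly n.
Proof. by []. Qed.

Lemma fibpoly_mul_congr (s t e : {poly F}) :
    s = t + 'X + e -> t ^+ 2 = t + 'X^2 + e ^+ 2 ->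
  forall m, exists E, fibpoly m * s = t ^+ m.+1 + 'X * (1 + t) ^+ m + e * E.
Proof.
move=> sE tE.
have vE : (1 + t) ^+ 2 = 1 + t + 'X^2 + e ^+ 2.
  by rewrite sqrD_pchar2 expr1n tE !addrA.
suff H : forall m,
    (exists E, fibpoly m * s = t ^+ m.+1 + 'X * (1 + t) ^+ m + e * E) /\
    (exists E, fibpoly m.+1 * s = t ^+ m.+2 + 'X * (1 + t) ^+ m.+1 + e * E).
  by move=> m; case: (H m).
elim=> [|m [[E1 h1] [E2 h2]]].
  by split; [exists 1 | exists (1 + 'X - e)]; rewrite /= sE ?tE; ring.
split; first by exists E2.
exists (E2 + 'X^2 * E1 - e * (t ^+ m.+1 + 'X * (1 + t) ^+ m)).
have tS : t ^+ m.+3 = t ^+ m.+1 * t ^+ 2 by rewrite -exprD addn2.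
have vS : (1 + t) ^+ m.+2 = (1 + t) ^+ m * (1 + t) ^+ 2 by rewrite -exprD addn2.
rewrite fibpolySS mulrDl -mulrA h2 h1 tS vS tE vE.
by rewrite !exprS; ring.
Qed.

Lemma fibpoly_pow2_sum_congr J m : exists E,
  fibpoly m * pow2_sum J
    = pow2_sum J ^+ m.+1.*2 + 'X * (1 + pow2_sum J) ^+ m.*2 + 'X^(2 ^ J.+1) * E.
Proof.
set s := pow2_sum J; set e : {poly F} := 'X^(2 ^ J.+1).
have sE : s = s ^+ 2 + 'X + e := pow2_sum_sqr J.
have sqr_sE : s ^+ 2 = (s ^+ 2) ^+ 2 + ('X^2 + e ^+ 2).
  by rewrite {1}sE !sqrD_pchar2 !addrA.
have tE : (s ^+ 2) ^+ 2 = s ^+ 2 + 'X^2 + e ^+ 2.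
  by rewrite -addrA {2}sqr_sE addrK_pchar2 ?pchar2_poly.
have [E ->] := fibpoly_mul_congr sE tE m.
by exists E; rewrite -exprM mul2n -[m.*2]mul2n exprM sqrD_pchar2 expr1n.
Qed.

Lemma pow2_sum_succ_sqr J :
  1 + pow2_sum J = (1 + pow2_sum J) ^+ 2 + 'X + 'X^(2 ^ J.+1).
Proof. by rewrite sqrD_pchar2 expr1n {1}pow2_sum_sqr !addrA. Qed.

Lemma coef_fibpoly_pow2_sum_double J m : (m.*2 < 2 ^ J.+1)%N ->
  (fibpoly m * pow2_sum J)`_m.*2 = 0.
Proof.
move=> lt_m2; have [E ->] := fibpoly_pow2_sum_congr J m.
rewrite !coefD coef_pow2_sum_exp_lt ?coefXnM ?lt_m2; last by rewrite ltn_double.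
rewrite (@add0r F) (@addr0 F) coefXM; case: m lt_m2 => [|k] _ //=.
by rewrite -[X in _ ^+ X]muln2 exprM coef_sqr_odd.
Qed.

Lemma coef_fibpoly_pow2_sum_odd J m : (m.*2.+1 < 2 ^ J.+1)%N ->
  (fibpoly m * pow2_sum J)`_m.*2.+1 = 1.
Proof.
move=> lt_m2; have [E ->] := fibpoly_pow2_sum_congr J m.
rewrite !coefD coef_pow2_sum_exp_lt ?coefXnM ?lt_m2; last by rewrite doubleS.
rewrite (@add0r F) (@addr0 F) coefXM /= -[X in _ ^+ X]muln2 exprM coef_sqr_double.
by apply: coef_exp_diag (pow2_sum_succ_sqr J) _ _; lia.
Qed.

Definition xz_mnm (a b : nat) : 'X_{1..2} :=
  [multinom (if i == 0 :> nat then a else b) | i < 2].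

Definition form (d : nat) (q : {poly F}) : R :=
  \sum_(b < d.+1) q`_b *: 'X_[xz_mnm (d - b) b].

Lemma xz_mnm_inj a b a' b' : xz_mnm a b = xz_mnm a' b' -> a = a' /\ b = b'.
Proof.
move/mnmP=> eq_ab; have := eq_ab (0 : 'I_2); have := eq_ab (1 : 'I_2).
by rewrite !mnmE /= => -> ->.
Qed.

Lemma mdeg_xz_mnm a b : mdeg (xz_mnm a b) = (a + b)%N.
Proof. by rewrite mdegE !big_ord_recl big_ord0 !mnmE /= addn0. Qed.

Lemma coefxz_form d (q : {poly F}) b : (b <= d)%N -> coefxz (form d q) (d - b) b = q`_b.
Proof.
rewrite -ltnS => lt_bd; rewrite /coefxz -/(xz_mnm _ _) /form raddf_sum /=.
rewrite (bigD1 (Ordinal lt_bd)) //= mcoeffZ mcoeffX eqxx mulr1 big1 ?addr0 //.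
move=> c ne_cb; rewrite mcoeffZ mcoeffX.
case: eqP => [/xz_mnm_inj [_ eq_cb]|]; last by rewrite mulr0.
by case/eqP: ne_cb; apply: val_inj.
Qed.

Lemma formD d p q : form d p + form d q = form d (p + q).
Proof.
by rewrite /form -big_split; apply: eq_bigr => b _; rewrite coefD scalerDl.
Qed.

Lemma vz_form d (q : {poly F}) : vz * form d q = form d.+1 ('X * q).
Proof.
rewrite /form big_distrr [RHS]big_ord_recl /= coefXM /= scale0r add0r.
apply: eq_bigr => b _; rewrite -scalerAr -mpolyXD coefXM /bump /= add1n subSS.
by congr (_ *: 'X_[_]); apply/mnmP => i; rewrite mnmDE !mnmE; case: i => -[|[|]].
Qed.

Lemma vx_form d (q : {poly F}) : (size q <= d.+1)%N -> vx * form d q = form d.+1 q.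
Proof.
move=> size_q; rewrite /form big_distrr [RHS]big_ord_recr /=.
rewrite nth_default // scale0r addr0; apply: eq_bigr => b _.
rewrite -scalerAr -mpolyXD subSn -1?ltnS //.
by congr (_ *: 'X_[_]); apply/mnmP => i; rewrite mnmDE !mnmE; case: i => -[|[|]].
Qed.

Lemma msize_form_le d (q : {poly F}) : (size q <= d.+1)%N -> (msize (form d q) <= d.+1)%N.
Proof.
move=> size_q; apply: leq_trans (msize_sum _ _ _) _; apply/bigmax_leqP => b _.
apply: leq_trans (msizeZ_le _ _) _.
by rewrite msizeX mdeg_xz_mnm subnK // -ltnS.
Qed.

Lemma tdeg_form d (q : {poly F}) : (size q <= d.+1)%N -> q != 0 -> tdeg (form d q) = d.
Proof.
move=> size_q nz_q; set b := (size q).-1.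
have le_bd : (b <= d)%N by rewrite /b -ltnS prednK // lt0n size_poly_eq0.
have : xz_mnm (d - b) b \in msupp (form d q).
  rewrite mcoeff_msupp; have := coefxz_form q le_bd; rewrite /coefxz => ->.
  by rewrite /b -lead_coefE lead_coef_eq0.
move/msize_mdeg_lt; rewrite mdeg_xz_mnm subnK // => lt_d_msize.
have := msize_form_le size_q; rewrite /tdeg; lia.
Qed.

Lemma rseq_coef_pow2_sum n c : (0 < c <= n)%N -> rseq c.-1 = (pow2_sum n)`_c.
Proof.
case/andP=> c_gt0 le_cn; rewrite coef_pow2_sum /rseq /in_r prednK //.
congr (nat_of_bool _)%:R; apply/existsP/existsP => -[j /eqP cE].
  have cE' : c = (2 ^ j)%N.
    by have := congr1 S cE; rewrite !prednK ?expn_gt0.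
  by exists (Ordinal (leq_trans (ltn_ord j) (leqW le_cn))); apply/eqP.
have lt_jc : (j < c)%N by rewrite cE ltn_expl.
by exists (Ordinal lt_jc); rewrite /= cE.
Qed.

Lemma Delta_form d (q : {poly F}) n : (size q <= d.+1)%N -> q != 0 -> (d < n)%N ->
  Delta (form d q) n = (q * pow2_sum n)`_n.
Proof.
move=> size_q nz_q lt_dn; rewrite /Delta tdeg_form // lt_dn.
rewrite (eq_bigr (fun m : 'I_n => rseq m * q`_(n.-1 - m))); last first.
  by move=> m le_md; rewrite coefxz_form.
rewrite big_mkcond /= (reindex_inj rev_ord_inj) /= coefM big_ord_recr /= subnn.
have -> : (pow2_sum n)`_0 = 0.
  by rewrite coef_pow2_sum; case: existsP => // -[j]; rewrite eq_sym expn_eq0.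
rewrite mulr0 addr0; apply: eq_bigr => j _.
have -> : (n.-1 - (n - j.+1) = j)%N by have := ltn_ord j; lia.
case: leqP => le_jd; first by rewrite mulrC -rseq_coef_pow2_sum ?subnS //; lia.
by rewrite nth_default ?mul0r //; apply: leq_trans size_q le_jd.
Qed.

Lemma size_fibpoly m : (size (fibpoly m) <= m.+1)%N.
Proof.
elim/ltn_ind: m => -[|[|k]] IH; first by rewrite size_poly1.
  by rewrite /= (leq_trans (size_polyD _ _)) // geq_max size_poly1 size_polyX.
rewrite fibpolySS (leq_trans (size_polyD _ _)) // geq_max (leq_trans (IH k.+1 _)) //.
rewrite (leq_trans (size_polyMleq _ _)) // size_polyXn.
by have := IH k (leqW (ltnSn k)); lia.
Qed.

Lemma fibpoly_neq0 m : fibpoly m != 0.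
Proof.
suff fib_coef0 : (fibpoly m)`_0 = 1.
  by apply/eqP => fib0; move: fib_coef0; rewrite fib0 coef0 => /eqP; rewrite eq_sym oner_eq0.
elim/ltn_ind: m => -[|[|k]] IH; first by rewrite coef1.
  by rewrite /= coefD coef1 coefX addr0.
by rewrite fibpolySS coefD IH // coefXnM addr0.
Qed.

Lemma size_XnM_fibpoly k m : (size ('X^k * fibpoly m)%R <= m.+1 + k)%N.
Proof.
rewrite (leq_trans (size_polyMleq _ _)) // size_polyXn addSn /= addnC.
by rewrite leq_add2r size_fibpoly.
Qed.

Lemma XnM_fibpoly_neq0 k m : 'X^k * fibpoly m != 0.
Proof. by rewrite mulf_neq0 ?fibpoly_neq0 // monic_neq0 // monicXn. Qed.

Lemma step_even i g :
  step (2 * i) (form i.+1 (fibpoly i.+1), g) = (form i.+1 (fibpoly i.+1), vz * g).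
Proof.
rewrite /step Delta_form ?size_fibpoly ?fibpoly_neq0 //; last lia.
have -> : ((2 * i).+2 = i.+1.*2)%N by lia.
rewrite coef_fibpoly_pow2_sum_double ?eqxx //.
by apply: ltn_trans (ltn_expl _ (ltnSn 1)) _; rewrite ltn_exp2l.
Qed.

Lemma step_odd i :
  step (2 * i).+1 (form i.+1 (fibpoly i.+1), form i.+2 ('X^2 * fibpoly i))
    = (vx * form i.+1 (fibpoly i.+1) + form i.+2 ('X^2 * fibpoly i),
       vz * form i.+1 (fibpoly i.+1)).
Proof.
rewrite /step Delta_form ?size_fibpoly ?fibpoly_neq0 //; last lia.
have -> : ((2 * i).+3 = i.+1.*2.+1)%N by lia.
rewrite coef_fibpoly_pow2_sum_odd ?oner_eq0; last first.
  by apply: leq_trans (ltn_expl _ (ltnSn 1)) _; rewrite leq_exp2l.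
rewrite !tdeg_form ?size_fibpoly ?fibpoly_neq0 ?XnM_fibpoly_neq0 //; last first.
  by rewrite (leq_trans (size_XnM_fibpoly _ _)) // addn2.
by rewrite ltnn subSn // subnn expr1.
Qed.

Lemma form1 (q : {poly F}) : form 1 q = q`_0 *: vx + q`_1 *: vz.
Proof.
rewrite /form big_ord_recr big_ord_recr big_ord0 /= add0r.
by congr (_ *: 'X_[_] + _ *: 'X_[_]); apply/mnmP => j; rewrite !mnmE; case: j => -[|[|]].
Qed.

Lemma fgseq_forms i :
  fgseq (2 * i) = (form i.+1 (fibpoly i.+1), form i.+1 ('X * fibpoly i)) /\
  fgseq (2 * i).+1 = (form i.+1 (fibpoly i.+1), form i.+2 ('X^2 * fibpoly i)).
Proof.
have odd_from_even j : fgseq (2 * j) = (form j.+1 (fibpoly j.+1), form j.+1 ('X * fibpoly j)) ->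
    fgseq (2 * j).+1 = (form j.+1 (fibpoly j.+1), form j.+2 ('X^2 * fibpoly j)).
  by move=> /= ->; rewrite step_even vz_form mulrA -expr2.
elim: i => [|i [_ IH]].
  suff even0 : fgseq (2 * 0) = (form 1 (fibpoly 1), form 1 ('X * fibpoly 0)).
    by split; last exact: odd_from_even.
  by rewrite /= mulr1 !form1 !coefD !coefX !coef1 /= (@addr0 F) (@add0r F) !scale1r scale0r add0r.
have even : fgseq (2 * i.+1) = (form i.+2 (fibpoly i.+2), form i.+2 ('X * fibpoly i.+1)).
  rewrite mulnS /= -/(fgseq (2 * i).+1) IH step_odd vx_form ?size_fibpoly //.
  by rewrite formD vz_form.
by split; last exact: odd_from_even.
Qed.

Lemma fgseq_even_succ i : fgseq (2 * i).+1 = ((fgseq (2 * i)).1, vz * (fgseq (2 * i)).2).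
Proof. by have [fg_even _] := fgseq_forms i; rewrite /= fg_even step_even. Qed.

Lemma fgseq_odd_succ i : fgseq (2 * i).+2
  = (vx * (fgseq (2 * i).+1).1 + (fgseq (2 * i).+1).2, vz * (fgseq (2 * i).+1).1).
Proof.
by have [_ fg_odd] := fgseq_forms i; rewrite [LHS]/= -/(fgseq (2 * i).+1) fg_odd step_odd.
Qed.

Lemma rowv_mulmx f g a b c d :
  rowv f g *m mx2 a b c d = rowv (f * a + g * c) (f * b + g * d).
Proof.
apply/rowP => j; rewrite !mxE !big_ord_recr big_ord0 /= !mxE /= add0r.
by case: j => -[|[|]].
Qed.

Lemma fgseq_succ_Mmx n :
  rowv (fgseq n.+1).1 (fgseq n.+1).2 = rowv (fgseq n).1 (fgseq n).2 *m Mmx n.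
Proof.
have [k [->|->]] : exists k, n = (2 * k)%N \/ n = (2 * k).+1.
  by exists n./2; rewrite mul2n -{1 3}[n]odd_double_half; case: odd; [right|left].
  rewrite fgseq_even_succ /Mmx oddM /Emx rowv_mulmx.
  by rewrite mulr1 !mulr0 addr0 add0r mulrC.
rewrite fgseq_odd_succ /Mmx /= oddM /Umx rowv_mulmx.
by rewrite mulr1 mulr0 addr0 [_ * vx]mulrC [_ * vz]mulrC.
Qed.

Lemma fgseq_odd_Pmx i :
  rowv (fgseq (2 * i).+1).1 (fgseq (2 * i).+1).2 = rowv (vx + vz) (vz ^+ 2) *m Pmx ^+ i.
Proof.
elim: i => [|i IH].
  by rewrite fgseq_succ_Mmx /Mmx /Emx rowv_mulmx expr0 mulmx1 mulr1 !mulr0 addr0 add0r expr2.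
have -> : ((2 * i.+1).+1 = (2 * i).+3)%N by rewrite mulnS.
rewrite fgseq_succ_Mmx fgseq_succ_Mmx IH.
by rewrite /Mmx /= oddM /= -!mulmxA; congr (_ *m _); exact: esym (exprSr Pmx i).
Qed.

Theorem corollary4 :
  (forall n : nat,
     rowv (fgseq n.+1).1 (fgseq n.+1).2 = rowv (fgseq n).1 (fgseq n).2 *m Mmx n)
  /\
  (forall i : nat, (1 <= i)%N ->
     rowv (fgseq (2 * i)).1 (fgseq (2 * i)).2
       = rowv (vx + vz) (vz ^+ 2) *m (Pmx ^+ i.-1 *m Umx)
     /\ rowv (fgseq (2 * i).+1).1 (fgseq (2 * i).+1).2
       = rowv (vx + vz) (vz ^+ 2) *m Pmx ^+ i).
Proof.
split=> [|[|i] // _]; first exact: fgseq_succ_Mmx.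
split; last exact: fgseq_odd_Pmx.
by rewrite mulnS fgseq_succ_Mmx fgseq_odd_Pmx /Mmx /= oddM /= mulmxA.
Qed.
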